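(* Let $\hat T$ be a TCD map on a BTB graph $G$ into $\mathbb{CP}^{d+1}$, let $s$ be a resplit, and let $\pi_U$ be a central projection from a point $U\in\mathbb{CP}^{d+1}$ to $\mathbb{CP}^d$. Then the resplit commutes with central projection: whenever both sides are defined, $\mu_s(\pi_U\circ\hat T)=\pi_U\circ\mu_s(\hat T)$, where $\mu_s$ denotes the resplit of TCD maps. Equivalently, $\mu_s\circ\pi_U=\pi_U\circ\mu_s$ as rational maps from rank-$(d+1)$ TCD maps on $G$ to TCD maps into $\mathbb{CP}^d$ on the resplit graph.
   Context: A BTB graph is a planar bipartite graph (black $B$, white $W$) in a disk or cactus with all black vertices of degree $3$. A TCD map is $T:W\to\mathbb{CP}^d$ such that for each black vertex $b$ the images of its three white neighbours are pairwise distinct and lie on a line $L_b$. Resplit $\mu_s$: at an internal white vertex $w_0$ of degree $2$ with black neighbours $b$ (other neighbours $w_1,w_2$) and $b'$ (other neighbours $w_3,w_4$), labelled so that $w_1,w_4$ share a face with $b,w_0,b'$ and $w_2,w_3$ share the other. It replaces $w_0,b,b'$ by $\tilde w_0$ and black vertices adjacent to $\{\tilde w_0,w_1,w_4\}$ and $\{\tilde w_0,w_2,w_3\}$. With lifts satisfying $V(w_0)=\alpha_1V(w_1)+\alpha_2V(w_2)=\alpha_3V(w_3)+\alpha_4V(w_4)$, the new point is $[\alpha_1V(w_1)-\alpha_4V(w_4)]$; other points are unchanged. It is defined when $T(w_1)\ne T(w_4)$ and $T(w_2)\ne T(w_3)$. Central projection from a point $U$ onto a complementary hyperplane $V\cong\mathbb{CP}^d$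 sends $P\ne U$ to $V\cap UP$. $\pi_U\circ\hat T$ is a TCD map iff $U$ is not any $\hat T(w)$ and lies on no line $L_b$. *)

(* Projective space CP^n is modelled by nonzero row vectors
   'rV[F]_n.+1 (homogeneous coordinates); two nonzero vectors represent the
   same projective point iff they span the same row space, (u == v)%MS. *)
From HB Require Import structures.
From mathcomp Require Import all_boot all_order all_algebra.
Set Implicit Arguments. Unset Strict Implicit. Unset Printing Implicit Defensive.
Import GRing.Theory.
Local Open Scope ring_scope.

(* A bipartite graph with white vertices [wv], black vertices [bv], adjacency
   [adj b w], and every black vertex of degree 3.  (The planar embedding in a
   disk/cactus is not modelled.) *)
Record btb_graph := BTB {
  wv : finType;
  bv : finType;
  adj : bv -> wv -> bool;
  black_deg3 : forall b, #|[pred w | adj b w]| = 3%N }.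

Definition same_pt (F : fieldType) n (u v : 'rV[F]_n) : bool := (u == v)%MS.

Definition collinear3 (F : fieldType) n (u v w : 'rV[F]_n) : bool :=
  (\rank (col_mx u (col_mx v w)) <= 2)%N.

Definition is_TCD (F : fieldType) n (G : btb_graph) (T : wv G -> 'rV[F]_n.+1) : Prop :=
  (forall w, T w != 0) /\
  (forall b u v, adj b u -> adj b v -> u != v -> ~~ same_pt (T u) (T v)) /\
  (forall b u v w, adj b u -> adj b v -> adj b w -> collinear3 (T u) (T v) (T w)).

(* Combinatorial data of a resplit at w0 with black neighbours b (other
   neighbours w1, w2) and b' (other neighbours w3, w4). *)
Record resplit_site (G : btb_graph) := RSite {
  rs_w0 : wv G; rs_b : bv G; rs_b' : bv G;
  rs_w1 : wv G; rs_w2 : wv G; rs_w3 : wv G; rs_w4 : wv G }.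

Definition valid_resplit (G : btb_graph) (s : resplit_site G) : Prop :=
  rs_b s != rs_b' s /\
  (forall b, adj b (rs_w0 s) = (b == rs_b s) || (b == rs_b' s)) /\
  adj (rs_b s) (rs_w1 s) /\ adj (rs_b s) (rs_w2 s) /\
  adj (rs_b' s) (rs_w3 s) /\ adj (rs_b' s) (rs_w4 s) /\
  uniq [:: rs_w0 s; rs_w1 s; rs_w2 s] /\ uniq [:: rs_w0 s; rs_w3 s; rs_w4 s].

Definition resplit_defined (F : fieldType) n (G : btb_graph) (s : resplit_site G)
  (T : wv G -> 'rV[F]_n.+1) : Prop :=
  ~~ same_pt (T (rs_w1 s)) (T (rs_w4 s)) /\ ~~ same_pt (T (rs_w2 s)) (T (rs_w3 s)).

(* With lifts V := T, the coefficients (alpha1, alpha2) of V(w0) in the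
   basis V(w1), V(w2), and (alpha3, alpha4) in V(w3), V(w4); the new point is
   alpha1 V(w1) - alpha4 V(w4). *)
Definition resplit_pt (F : fieldType) n (G : btb_graph) (s : resplit_site G)
  (T : wv G -> 'rV[F]_n.+1) : 'rV[F]_n.+1 :=
  let a : 'rV[F]_2 := T (rs_w0 s) *m pinvmx (col_mx (T (rs_w1 s)) (T (rs_w2 s))) in
  let c : 'rV[F]_2 := T (rs_w0 s) *m pinvmx (col_mx (T (rs_w3 s)) (T (rs_w4 s))) in
  a ord0 ord0 *: T (rs_w1 s) - c ord0 ord_max *: T (rs_w4 s).

(* The resplit TCD map mu_s(T); white vertex w0 plays the role of tilde w0,
   all other points unchanged. *)
Definition resplit (F : fieldType) n (G : btb_graph) (s : resplit_site G)
  (T : wv G -> 'rV[F]_n.+1) : wv G -> 'rV[F]_n.+1 :=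
  fun w => if w == rs_w0 s then resplit_pt s T else T w.

(* Central projection from U onto the hyperplane spanned by the rows of Hm
   (complementary to U), identified with CP^d via the basis Hm:
   P = t U + x Hm  |->  x.  Then x Hm is V \cap UP. *)
Definition cproj (F : fieldType) d (U : 'rV[F]_d.+2) (Hm : 'M[F]_(d.+1, d.+2))
  (P : 'rV[F]_d.+2) : 'rV[F]_d.+1 :=
  rsubmx (P *m (invmx (col_mx U Hm : 'M[F]_(1 + d.+1, d.+2)) : 'M[F]_(d.+2, 1 + d.+1))).

(* Central projection is induced by a linear map [K] on lifts, and for such a
   map the resplit point can be computed from the lifts of the projected
   points: if V(w1), V(w2) and their images stay independent, the coordinates
   (alpha1, alpha2) of V(w0) in that basis are also the coordinates of
   V(w0) K in the basis V(w1) K, V(w2) K, and likewise for (alpha3, alpha4).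
   Hence alpha1 V(w1) K - alpha4 V(w4) K is the image of the new point, which
   gives the commutation even at the level of lifts. *)
From HB Require Import structures.
From mathcomp Require Import all_boot all_order all_algebra.
Local Open Scope ring_scope.
Import GRing.Theory.
Set Implicit Arguments. Unset Strict Implicit.

Lemma row_free_col_mx_rV (F : fieldType) n (u v : 'rV[F]_n) :
  u != 0 -> v != 0 -> ~~ (u == v)%MS -> row_free (col_mx u v).
Proof.
move=> u0 v0 neq_uv; rewrite -row_leq_rank; apply: contraR neq_uv.
rewrite -ltnNge ltnS => rank_le1.
have sub_u : (u <= col_mx u v)%MS by rewrite -addsmxE addsmxSl.
have sub_uv : (col_mx u v <= u)%MS.
  by rewrite -(geq_leqif (mxrank_leqif_sup sub_u)) rank_rV u0.
have sub_vu : (v <= u)%MS by move: sub_uv; rewrite col_mx_sub => /andP[].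
by rewrite sub_vu andbT -(geq_leqif (mxrank_leqif_sup sub_vu)) !rank_rV u0 v0.
Qed.

Lemma collinear3_submx (F : fieldType) n (u v w : 'rV[F]_n) :
  row_free (col_mx v w) -> collinear3 u v w -> (u <= col_mx v w)%MS.
Proof.
move=> free_vw; rewrite /collinear3 => rank_le2.
have sub_vw : (col_mx v w <= col_mx u (col_mx v w))%MS.
  by move: (submx_refl (col_mx u (col_mx v w))); rewrite col_mx_sub => /andP[].
have : (col_mx u (col_mx v w) <= col_mx v w)%MS.
  by rewrite -(geq_leqif (mxrank_leqif_sup sub_vw)) (eqP free_vw).
by rewrite col_mx_sub => /andP[].
Qed.

Lemma pinvmx_mulmx_coord (F : fieldType) m n p (u : 'rV[F]_n)
    (B : 'M[F]_(m, n)) (K : 'M[F]_(n, p)) :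
  row_free (B *m K) -> (u <= B)%MS -> u *m K *m pinvmx (B *m K) = u *m pinvmx B.
Proof.
move=> freeBK sub_uB.
by rewrite -{1}(mulmxKpV sub_uB) -[_ *m B *m K]mulmxA (mulmxKp freeBK).
Qed.

Section TCDPairs.
Variables (F : fieldType) (n : nat) (G : btb_graph) (T : wv G -> 'rV[F]_n.+1).
Hypothesis tcdT : is_TCD T.

Lemma tcd_pair_row_free b u v :
  adj b u -> adj b v -> u != v -> row_free (col_mx (T u) (T v)).
Proof.
case: tcdT => [T_neq0 [T_distinct _]] bu bv neq_uv.
apply: row_free_col_mx_rV (T_neq0 u) (T_neq0 v) (T_distinct b u v bu bv neq_uv).
Qed.

Lemma tcd_submx b w u v :
  adj b w -> adj b u -> adj b v -> u != v -> (T w <= col_mx (T u) (T v))%MS.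
Proof.
case: tcdT => [_ [_ T_collinear]] bw bu bv neq_uv.
apply: collinear3_submx (tcd_pair_row_free bu bv neq_uv) _.
exact: T_collinear bw bu bv.
Qed.

End TCDPairs.

Lemma resplit_comp_mulmx (F : fieldType) n m (G : btb_graph) (s : resplit_site G)
    (T : wv G -> 'rV[F]_n.+1) (f : 'rV[F]_n.+1 -> 'rV[F]_m.+1) (K : 'M[F]_(n.+1, m.+1)) :
  f =1 mulmx^~ K -> valid_resplit s -> is_TCD T -> is_TCD (f \o T) ->
  forall w, resplit s (f \o T) w = f (resplit s T w).
Proof.
move=> fK [_ [adj_w0 [b_w1 [b_w2 [b'_w3 [b'_w4 [uniq12 uniq34]]]]]]] tcdT tcdfT w.
rewrite /resplit; case: eqP => // _.
have b_w0 : adj (rs_b s) (rs_w0 s) by rewrite adj_w0 eqxx.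
have b'_w0 : adj (rs_b' s) (rs_w0 s) by rewrite adj_w0 eqxx orbT.
move: uniq12 uniq34; rewrite /= !inE !negb_or !andbT.
move=> /andP[_ neq12] /andP[_ neq34].
have freeK12 := tcd_pair_row_free tcdfT b_w1 b_w2 neq12.
have freeK34 := tcd_pair_row_free tcdfT b'_w3 b'_w4 neq34.
rewrite /= !fK -!mul_col_mx in freeK12 freeK34.
rewrite /resplit_pt /= !fK -!mul_col_mx.
rewrite (pinvmx_mulmx_coord freeK12 (tcd_submx tcdT b_w0 b_w1 b_w2 neq12)).
rewrite (pinvmx_mulmx_coord freeK34 (tcd_submx tcdT b'_w0 b'_w3 b'_w4 neq34)).
by rewrite mulmxBl -!scalemxAl.
Qed.

Definition cproj_mx (F : fieldType) d (U : 'rV[F]_d.+2) (Hm : 'M[F]_(d.+1, d.+2)) :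
  'M[F]_(d.+2, d.+1) :=
  rsubmx (invmx (col_mx U Hm : 'M[F]_(1 + d.+1, d.+2)) : 'M[F]_(d.+2, 1 + d.+1)).

Lemma cprojE (F : fieldType) d (U : 'rV[F]_d.+2) (Hm : 'M[F]_(d.+1, d.+2)) P :
  cproj U Hm P = P *m cproj_mx U Hm.
Proof. by rewrite /cproj -{1}[invmx _]hsubmxK mul_mx_row row_mxKr. Qed.

Theorem lemma5p3 (F : fieldType) (d : nat) (G : btb_graph) (s : resplit_site G)
  (T : wv G -> 'rV[F]_d.+2) (U : 'rV[F]_d.+2) (Hm : 'M[F]_(d.+1, d.+2)) :
  valid_resplit s ->
  is_TCD T ->
  U != 0 -> row_free Hm -> ~~ (U <= Hm)%MS ->
  is_TCD (fun w => cproj U Hm (T w)) ->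
  resplit_defined s T ->
  resplit_defined s (fun w => cproj U Hm (T w)) ->
  forall w, same_pt (resplit s (fun w' => cproj U Hm (T w')) w)
                    (cproj U Hm (resplit s T w)).
Proof.
move=> valid_s tcdT _ _ _ tcdPT _ _ w.
by rewrite /same_pt (resplit_comp_mulmx (@cprojE _ _ U Hm) valid_s tcdT tcdPT) submx_refl.
Qed.
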